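(* Let $(M,\Delta,S,\varepsilon)$ be a weak Kac algebra with source Cartan subalgebra $N_s$, and write $e=\Delta(1)$. Suppose $N_s\cong\bigoplus_{\alpha=1}^K M_{n_\alpha}(\mathbb{C})$ and let $\{f^\alpha_{pq}\}_{p,q=1,\dots,n_\alpha}^{\alpha=1,\dots,K}$ be a system of matrix units in $N_s$. Then $$e=\sum_\alpha\frac{1}{n_\alpha}\sum_{p,q}f^\alpha_{pq}\otimes S(f^\alpha_{qp}).$$
   Context: All algebras are finite-dimensional over $\mathbb{C}$; $\varsigma$ denotes the flip and $\mu(x\otimes y)=xy$. A weak Kac algebra is a quadruple $(M,\Delta,S,\varepsilon)$ where $M$ is a finite-dimensional $C^*$-algebra; $\Delta:M\to M\otimes M$ is an injective, not necessarily unital, $*$-homomorphism with $(\Delta\otimes\mathrm{id})\Delta=(\mathrm{id}\otimes\Delta)\Delta$; $S:M\to M$ is a linear, unital, antimultiplicative, $*$-preserving bijection with $S^2=\mathrm{id}$ and $(S\otimes S)\circ\Delta=\varsigma\circ\Delta\circ S$; and $\varepsilon:M\to\mathbb{C}$ is linear with $(\varepsilon\otimes\mathrm{id})\Delta=(\mathrm{id}\otimes\varepsilon)\Delta=\mathrm{id}$, $\varepsilon\circ S=\varepsilon$, $\varepsilon(x^* )=\overline{\varepsilon(x)}$, $(\varepsilon\otimes\varepsilon)((x\otimes1)e(1\otimes y))=\varepsilon(xy)$ for all $x,y$, where $e:=\Delta(1)$, and $(\varepsilon_s\otimes\mathrm{id})\Delta(x)=(1\otimes x)e$ for all $x$, where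 $\varepsilon_s:=\mu(S\otimes\mathrm{id})\Delta$. The source Cartan subalgebra is $N_s=\{x\in M:\Delta(x)=e(1\otimes x)=(1\otimes x)e\}$ (a $C^*$-subalgebra of $M$). A system of matrix units $\{f^\alpha_{pq}\}$ means $f^\alpha_{pq}f^\beta_{rs}=\delta_{\alpha\beta}\delta_{qr}f^\alpha_{ps}$, $(f^\alpha_{pq})^*=f^\alpha_{qp}$, $\sum_{\alpha,p}f^\alpha_{pp}=1$, spanning $N_s$. *)

(* Complex numbers are  R[i]  for  R : realType  (any realType
   is isomorphic to the real numbers, so R[i] is C).
   A finite-dimensional C*-algebra is represented concretely as a unital
   *-subalgebra of n x n complex matrices (star = conjugate transpose), and
   M (x) M as the span of Kronecker products  a *t b  (a, b in M) inside
   (n*n) x (n*n) matrices.  Linear maps on M (or M (x) M) are given as linear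
   maps on the ambient full matrix algebra; tensor products of linear maps
   are their (well-defined) bilinear extensions, computed on matrix units. *)
From HB Require Import structures.
From mathcomp Require Import all_boot all_order all_algebra.
From mathcomp Require Import reals.
From mathcomp Require Import complex mxtens.
Set Implicit Arguments. Unset Strict Implicit. Unset Printing Implicit Defensive.
Import GRing.Theory Num.Theory.
Local Open Scope ring_scope.

Section WKA.
Variables (R : realType) (n : nat).
Local Notation C := (R[i]).

Definition adjmx p q (A : 'M[C]_(p, q)) : 'M[C]_(q, p) := (map_mx Num.conj A)^T.

(* bilinear extension of h : M_n x M_n -> T to M_n (x) M_n = M_(n*n),
   X = \sum X((i,k),(j,l)) E_ij *t E_kl *)
Definition tens_ext (T : lmodType C) (h : 'M[C]_n -> 'M[C]_n -> T)
    (X : 'M[C]_(n * n)) : T :=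
  \sum_(i < n) \sum_(j < n) \sum_(k < n) \sum_(l < n)
    X (mxtens_index (i, k)) (mxtens_index (j, l)) *: h (delta_mx i j) (delta_mx k l).

Definition tens_form (h : 'M[C]_n -> 'M[C]_n -> C) (X : 'M[C]_(n * n)) : C :=
  \sum_(i < n) \sum_(j < n) \sum_(k < n) \sum_(l < n)
    X (mxtens_index (i, k)) (mxtens_index (j, l)) * h (delta_mx i j) (delta_mx k l).

Definition tensmap p q (f : 'M[C]_n -> 'M[C]_p) (g : 'M[C]_n -> 'M[C]_q)
  (X : 'M[C]_(n * n)) : 'M[C]_(p * q) := tens_ext (fun a b => f a *t g b) X.

Definition flipmx (X : 'M[C]_(n * n)) : 'M[C]_(n * n) := tens_ext (fun a b => b *t a) X.

Definition mulmap (X : 'M[C]_(n * n)) : 'M[C]_n := tens_ext (fun a b => a *m b) X.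

Definition epsl (eps : 'M[C]_n -> C) (X : 'M[C]_(n * n)) : 'M[C]_n :=
  tens_ext (fun a b => eps a *: b) X.
Definition epsr (eps : 'M[C]_n -> C) (X : 'M[C]_(n * n)) : 'M[C]_n :=
  tens_ext (fun a b => eps b *: a) X.


(* membership in the algebra M, encoded as a subspace MM of matrices *)
Definition inM m (MM : 'M[C]_(m, n * n)) (x : 'M[C]_n) : Prop := (x \in MM)%MS.

Definition inMM m (MM : 'M[C]_(m, n * n)) (X : 'M[C]_(n * n)) : Prop :=
  exists r (a b : 'I_r -> 'M[C]_n),
    (forall t, inM MM (a t) /\ inM MM (b t)) /\ X = \sum_(t < r) (a t *t b t).

Definition is_weak_Kac m (MM : 'M[C]_(m, n * n))
  (Delta : 'M[C]_n -> 'M[C]_(n * n)) (S : 'M[C]_n -> 'M[C]_n)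
  (eps : 'M[C]_n -> C) : Prop :=
  let M := inM MM in
  let e := Delta 1%:M in
  (M 1%:M /\
      (forall x y, M x -> M y -> M (x *m y)) /\
      (forall x, M x -> M (adjmx x))) /\
      ((forall a x y, Delta (a *: x + y) = a *: Delta x + Delta y) /\
          (forall x, M x -> inMM MM (Delta x)) /\
          (forall x y, M x -> M y -> Delta x = Delta y -> x = y) /\
          (forall x y, M x -> M y -> Delta (x *m y) = Delta x *m Delta y) /\
          (forall x, M x -> Delta (adjmx x) = adjmx (Delta x)) /\
          (forall x, M x ->
             castmx (esym (mulnA n n n), esym (mulnA n n n))
               (tensmap Delta id (Delta x)) = tensmap id Delta (Delta x))) /\
      ((forall a x y, S (a *: x + y) = a *: S x + S y) /\
          (forall x, M x -> M (S x)) /\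
          S 1%:M = 1%:M /\
          (forall x y, M x -> M y -> S (x *m y) = S y *m S x) /\
          (forall x, M x -> S (adjmx x) = adjmx (S x)) /\
          (forall x, M x -> S (S x) = x) /\
          (forall x, M x -> tensmap S S (Delta x) = flipmx (Delta (S x)))) /\
      ((forall a x y, eps (a *: x + y) = a * eps x + eps y) /\
          (forall x, M x -> epsl eps (Delta x) = x /\ epsr eps (Delta x) = x) /\
          (forall x, M x -> eps (S x) = eps x) /\
          (forall x, M x -> eps (adjmx x) = Num.conj (eps x)) /\
          (forall x y, M x -> M y ->
             tens_form (fun a b => eps a * eps b)
               (((x *t (1%:M : 'M[C]_n)) *m e) *m ((1%:M : 'M[C]_n) *t y))
             = eps (x *m y)) /\
          (forall x, M x ->
             tensmap (fun z => mulmap (tensmap S id (Delta z))) id (Delta x)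
             = ((1%:M : 'M[C]_n) *t x) *m e)).

Definition in_Ns m (MM : 'M[C]_(m, n * n))
  (Delta : 'M[C]_n -> 'M[C]_(n * n)) (x : 'M[C]_n) : Prop :=
  inM MM x /\ Delta x = Delta 1%:M *m ((1%:M : 'M[C]_n) *t x)
           /\ Delta x = ((1%:M : 'M[C]_n) *t x) *m Delta 1%:M.

End WKA.

(* Write e = Delta 1 = \sum_t a_t (x) b_t with a_t, b_t in M, and let g be the
   right-hand side.  For z in N_s the axiom on eps_s gives
   (z (x) 1) e = (1 (x) S z) e, so by the matrix unit relations
   (f_pq (x) S f_qp) e = (1 (x) S f_pp) e for every q; averaging over q and
   summing gives g e = e.  On the other hand g (1 (x) S z) = g (z (x) 1) for z
   in N_s.  Slicing e = \sum E_ij (x) w_ij along the first leg, coassociativity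
   and e^* = e show that every S w_ij lies in N_s, and \sum S(w_ij) E_ij = 1 by
   the counit; hence g e = g, and e = g. *)

From HB Require Import structures.
From mathcomp Require Import all_boot all_order all_algebra.
From mathcomp Require Import reals.
From mathcomp Require Import complex mxtens.
Import GRing.Theory Num.Theory.
Local Open Scope ring_scope.
Set Implicit Arguments. Unset Strict Implicit. Unset Printing Implicit Defensive.

Section LinearPredicate.
Variables (R : pzRingType) (U V : lmodType R) (f : U -> V).
Hypothesis f_linear : linear f.

Let fL : {linear U -> V} := HB.pack f (GRing.isLinear.Build R U V *:%R f f_linear).

Lemma linear0_of : f 0 = 0. Proof. exact: (linear0 fL). Qed.

Lemma linearZ_of c x : f (c *: x) = c *: f x. Proof. exact: (linearZ_LR fL). Qed.

Lemma linear_sum_of I (r : seq I) (P : pred I) (F : I -> U) :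
  f (\sum_(i <- r | P i) F i) = \sum_(i <- r | P i) f (F i).
Proof. exact: (linear_sum fL). Qed.

End LinearPredicate.

Lemma linear_comp_of (R : pzSemiRingType) (U V W : lSemiModType R) (g : V -> W) (f : U -> V) :
  linear g -> linear f -> linear (fun x => g (f x)).
Proof. by move=> lg lf c x y; rewrite lf lg. Qed.

Section TensorProducts.
Variable R : comNzRingType.

Lemma linear_tensmxl m1 n1 m2 n2 (b : 'M[R]_(m2, n2)) :
  linear (fun a : 'M[R]_(m1, n1) => a *t b).
Proof. by move=> c x y; apply/matrixP => i j; rewrite !mxE mulrDl mulrA. Qed.

Lemma linear_tensmxr m1 n1 m2 n2 (a : 'M[R]_(m1, n1)) :
  linear (fun b : 'M[R]_(m2, n2) => a *t b).
Proof. by move=> c x y; apply/matrixP => i j; rewrite !mxE mulrDr mulrCA. Qed.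

Lemma mxtens_index_eq p q (i k : 'I_p) (j l : 'I_q) :
  (mxtens_index (i, j) == mxtens_index (k, l)) = (i == k) && (j == l).
Proof. by rewrite (can_eq (@mxtens_indexK p q)). Qed.

Lemma tensmx_delta p q (i j : 'I_p) (k l : 'I_q) :
  delta_mx i j *t delta_mx k l
  = delta_mx (mxtens_index (i, k)) (mxtens_index (j, l)) :> 'M[R]_(p * q).
Proof.
apply/matrixP => x y; case: (mxtens_indexP x) => x1 x2; case: (mxtens_indexP y) => y1 y2.
rewrite tensmxE !mxE !mxtens_index_eq.
by case: (x1 == i); case: (x2 == k); case: (y1 == j); case: (y2 == l);
  rewrite ?mulr0 ?mul0r ?mulr1.
Qed.

Lemma tensmx11 p q : (1%:M : 'M[R]_p) *t (1%:M : 'M[R]_q) = 1%:M.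
Proof.
apply/matrixP => x y; case: (mxtens_indexP x) => x1 x2; case: (mxtens_indexP y) => y1 y2.
rewrite tensmxE !mxE mxtens_index_eq.
by case: (x1 == y1); case: (x2 == y2); rewrite ?mulr0 ?mul0r ?mulr1.
Qed.

Lemma tensmxA p q r (a : 'M[R]_p) (b : 'M[R]_q) (c : 'M[R]_r) :
  castmx (esym (mulnA p q r), esym (mulnA p q r)) ((a *t b) *t c) = a *t (b *t c).
Proof.
apply/matrixP => x y; case: (mxtens_indexP x) => x1 x'; case: (mxtens_indexP y) => y1 y'.
case: (mxtens_indexP x') => x2 x3; case: (mxtens_indexP y') => y2 y3.
have cast_index (u1 : 'I_p) (u2 : 'I_q) (u3 : 'I_r) :
    cast_ord (esym (esym (mulnA p q r))) (mxtens_index (u1, mxtens_index (u2, u3)))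
    = mxtens_index (mxtens_index (u1, u2), u3).
  by apply: val_inj; rewrite /= mulnDl -mulnA addnA.
by rewrite castmxE !cast_index !tensmxE mulrA.
Qed.

Lemma linear_castmx p q p' q' (eq_pq : (p = p') * (q = q')) :
  linear (@castmx R p q p' q' eq_pq).
Proof. by move=> c x y; apply/matrixP => i j; rewrite !castmxE !mxE !castmxE. Qed.

Lemma linear_mulmxl p q r (A : 'M[R]_(p, q)) : linear (fun X : 'M[R]_(q, r) => A *m X).
Proof. by move=> c x y; rewrite mulmxDr scalemxAr. Qed.

Lemma linear_tensmx_eq (T : lmodType R) p q (F G : 'M[R]_(p * q) -> T) :
  linear F -> linear G -> (forall a b, F (a *t b) = G (a *t b)) -> F =1 G.
Proof.
move=> lF lG FG X; rewrite (matrix_sum_delta X) !(linear_sum_of lF, linear_sum_of lG).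
apply: eq_bigr => x _; rewrite !(linear_sum_of lF, linear_sum_of lG).
apply: eq_bigr => y _; rewrite (linearZ_of lF) (linearZ_of lG).
case: (mxtens_indexP x) => x1 x2; case: (mxtens_indexP y) => y1 y2.
by rewrite -tensmx_delta FG.
Qed.

Definition mxslice p q (i j : 'I_p) (X : 'M[R]_(p * q)) : 'M[R]_q :=
  \matrix_(k, l) X (mxtens_index (i, k)) (mxtens_index (j, l)).

Lemma linear_mxslice p q (i j : 'I_p) : linear (@mxslice p q i j).
Proof. by move=> c x y; apply/matrixP => k l; rewrite !mxE. Qed.

Lemma mxslice_tensmx p q (i j : 'I_p) (a : 'M[R]_p) (b : 'M[R]_q) :
  mxslice i j (a *t b) = a i j *: b.
Proof. by apply/matrixP => k l; rewrite [LHS]mxE tensmxE [RHS]mxE. Qed.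

Lemma mxslice_tens1mx p q (i j : 'I_p) (x : 'M[R]_q) (X : 'M[R]_(p * q)) :
  mxslice i j ((1%:M *t x) *m X) = x *m mxslice i j X.
Proof.
apply: (linear_tensmx_eq (F := fun X => mxslice i j ((1%:M *t x) *m X))
                         (G := fun X => x *m mxslice i j X)) X.
- exact: linear_comp_of (linear_mxslice i j) (linear_mulmxl _).
- exact: linear_comp_of (linear_mulmxl _) (linear_mxslice i j).
by move=> u v; rewrite tensmx_mul mul1mx !mxslice_tensmx scalemxAr.
Qed.

Lemma matrix_sum_tens_delta p q (X : 'M[R]_(p * q)) :
  X = \sum_(i < p) \sum_(j < p) delta_mx i j *t mxslice i j X.
Proof.
apply: (linear_tensmx_eq (F := id)
  (G := fun X => \sum_(i < p) \sum_(j < p) delta_mx i j *t mxslice i j X)) X => //.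
- move=> c X Y; rewrite scaler_sumr -big_split; apply: eq_bigr => i _.
  rewrite scaler_sumr -big_split; apply: eq_bigr => j _.
  by rewrite linear_mxslice linear_tensmxr.
move=> x y /=; rewrite {1}(matrix_sum_delta x) (linear_sum_of (linear_tensmxl y)).
apply: eq_bigr => i _; rewrite (linear_sum_of (linear_tensmxl y)); apply: eq_bigr => j _.
by rewrite mxslice_tensmx (linearZ_of (linear_tensmxl y)) (linearZ_of (linear_tensmxr _)).
Qed.

(* [tens_ext] is [tensor_ext] at [p = q = n]; unequal legs are needed
   to apply eps_s (x) id to the three-fold tensor of coassociativity. *)
Definition tensor_ext (T : lmodType R) p q (h : 'M[R]_p -> 'M[R]_q -> T)
    (X : 'M[R]_(p * q)) : T :=
  \sum_(i < p) \sum_(j < p) \sum_(k < q) \sum_(l < q)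
    X (mxtens_index (i, k)) (mxtens_index (j, l)) *: h (delta_mx i j) (delta_mx k l).

Lemma linear_tensor_ext (T : lmodType R) p q (h : 'M[R]_p -> 'M[R]_q -> T) :
  linear (tensor_ext h).
Proof.
move=> c X Y; rewrite /tensor_ext scaler_sumr -big_split; apply: eq_bigr => i _.
rewrite scaler_sumr -big_split; apply: eq_bigr => j _.
rewrite scaler_sumr -big_split; apply: eq_bigr => k _.
rewrite scaler_sumr -big_split; apply: eq_bigr => l _.
by rewrite !mxE scalerDl scalerA.
Qed.

Lemma tensor_ext_tensmx (T : lmodType R) p q (h : 'M[R]_p -> 'M[R]_q -> T) :
  bilinear_for *:%R *:%R h -> forall a b, tensor_ext h (a *t b) = h a b.
Proof.
case=> hl hr a b; rewrite {2}(matrix_sum_delta a) (linear_sum_of (hl b)).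
apply: eq_bigr => i _; rewrite (linear_sum_of (hl b)); apply: eq_bigr => j _.
rewrite (linearZ_of (hl b)) {2}(matrix_sum_delta b) (linear_sum_of (hr _)) scaler_sumr.
apply: eq_bigr => k _; rewrite (linear_sum_of (hr _)) scaler_sumr.
by apply: eq_bigr => l _; rewrite (linearZ_of (hr _)) scalerA tensmxE.
Qed.

Lemma bilinear_tensmx_comp m1 m2 p q (f : 'M[R]_m1 -> 'M[R]_p) (g : 'M[R]_m2 -> 'M[R]_q) :
  linear f -> linear g -> bilinear_for *:%R *:%R (fun a b => f a *t g b).
Proof.
move=> lf lg; split => [b|a] c x y /=; first by rewrite lf linear_tensmxl.
by rewrite lg linear_tensmxr.
Qed.

End TensorProducts.

Section ComplexMatrices.
Variable R : realType.
Local Notation C := R[i].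

Lemma adjmx_mul p q r (A : 'M[C]_(p, q)) (B : 'M[C]_(q, r)) :
  adjmx (A *m B) = adjmx B *m adjmx A.
Proof. by rewrite /adjmx map_mxM trmx_mul. Qed.

Lemma adjmx_tens p q r s (A : 'M[C]_(p, q)) (B : 'M[C]_(r, s)) :
  adjmx (A *t B) = adjmx A *t adjmx B.
Proof. by rewrite /adjmx map_mxT trmx_tens. Qed.

Lemma adjmx1 p : adjmx (1%:M : 'M[C]_p) = 1%:M.
Proof. by apply/matrixP => i j; rewrite !mxE eq_sym rmorph_nat. Qed.

Variable n : nat.

Lemma linear_tensmap p q (f : 'M[C]_n -> 'M[C]_p) (g : 'M[C]_n -> 'M[C]_q) :
  linear (tensmap f g).
Proof. exact: linear_tensor_ext. Qed.

Lemma tensmap_tensmx p q (f : 'M[C]_n -> 'M[C]_p) (g : 'M[C]_n -> 'M[C]_q) :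
  linear f -> linear g -> forall a b, tensmap f g (a *t b) = f a *t g b.
Proof. by move=> lf lg; apply: tensor_ext_tensmx (bilinear_tensmx_comp lf lg). Qed.

Lemma tensmap_sum p q (f : 'M[C]_n -> 'M[C]_p) (g : 'M[C]_n -> 'M[C]_q) :
  linear f -> linear g -> forall I (s : seq I) (x y : I -> 'M[C]_n),
  tensmap f g (\sum_(t <- s) x t *t y t) = \sum_(t <- s) f (x t) *t g (y t).
Proof.
move=> lf lg I s x y; rewrite (linear_sum_of (linear_tensmap f g)).
by apply: eq_bigr => t _; rewrite tensmap_tensmx.
Qed.

Lemma linear_flipmx : linear (@flipmx R n).
Proof. exact: linear_tensor_ext. Qed.

Lemma flipmx_tensmx (a b : 'M[C]_n) : flipmx (a *t b) = b *t a.
Proof.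
by apply: tensor_ext_tensmx; split => [b'|a'] c u v; rewrite ?linear_tensmxl ?linear_tensmxr.
Qed.

Lemma flipmx_sum I (s : seq I) (x y : I -> 'M[C]_n) :
  flipmx (\sum_(t <- s) x t *t y t) = \sum_(t <- s) y t *t x t.
Proof.
by rewrite (linear_sum_of linear_flipmx); apply: eq_bigr => t _; rewrite flipmx_tensmx.
Qed.

Lemma flipmxK : involutive (@flipmx R n).
Proof.
apply: (linear_tensmx_eq (F := fun X => flipmx (flipmx X)) (G := id)) => //.
- exact: linear_comp_of linear_flipmx linear_flipmx.
by move=> a b; rewrite !flipmx_tensmx.
Qed.

Lemma linear_mulmap : linear (@mulmap R n).
Proof. exact: linear_tensor_ext. Qed.

Lemma mulmap_sum I (s : seq I) (x y : I -> 'M[C]_n) :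
  mulmap (\sum_(t <- s) x t *t y t) = \sum_(t <- s) x t *m y t.
Proof.
rewrite (linear_sum_of linear_mulmap); apply: eq_bigr => t _.
apply: tensor_ext_tensmx; split => [b|a] c u v /=.
  by rewrite mulmxDl scalemxAl.
by rewrite mulmxDr scalemxAr.
Qed.

Lemma linear_epsr (eps : 'M[C]_n -> C) : linear (epsr eps).
Proof. exact: linear_tensor_ext. Qed.

Lemma epsr_tensmx (eps : 'M[C]_n -> C) (a b : 'M[C]_n) :
  scalar eps -> epsr eps (a *t b) = eps b *: a.
Proof.
move=> eps_lin; apply: tensor_ext_tensmx; split => [b'|a'] c x y /=.
  by rewrite scalerDr !scalerA mulrC.
by rewrite eps_lin scalerDl scalerA.
Qed.

End ComplexMatrices.

Section WeakKacAlgebra.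
Variables (R : realType) (n m : nat) (MM : 'M[R[i]]_(m, n * n))
  (Delta : 'M[R[i]]_n -> 'M[R[i]]_(n * n)) (S : 'M[R[i]]_n -> 'M[R[i]]_n)
  (eps : 'M[R[i]]_n -> R[i]).
Local Notation C := R[i].
Local Notation M := (inM MM).
Local Notation Ns := (in_Ns MM Delta).
Local Notation e := (Delta 1%:M).
Local Notation "'1" := (1%:M : 'M[C]_n).

Hypothesis M1 : M '1.
Hypothesis Delta_linear : linear Delta.
Hypothesis Delta_MM : forall x, M x -> inMM MM (Delta x).
Hypothesis Delta_mul : forall x y, M x -> M y -> Delta (x *m y) = Delta x *m Delta y.
Hypothesis Delta_adj : forall x, M x -> Delta (adjmx x) = adjmx (Delta x).
Hypothesis Delta_coassoc : forall x, M x ->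
  castmx (esym (mulnA n n n), esym (mulnA n n n)) (tensmap Delta id (Delta x))
  = tensmap id Delta (Delta x).
Hypothesis S_linear : linear S.
Hypothesis S_M : forall x, M x -> M (S x).
Hypothesis S1 : S '1 = '1.
Hypothesis S_mul : forall x y, M x -> M y -> S (x *m y) = S y *m S x.
Hypothesis SK : forall x, M x -> S (S x) = x.
Hypothesis S_Delta : forall x, M x -> tensmap S S (Delta x) = flipmx (Delta (S x)).
Hypothesis eps_scalar : scalar eps.
Hypothesis eps_counit : forall x, M x -> epsr eps (Delta x) = x.
Hypothesis eps_s_Delta : forall x, M x ->
  tensmap (fun z => mulmap (tensmap S id (Delta z))) id (Delta x) = ('1 *t x) *m e.

Variables (r : nat) (a b : 'I_r -> 'M[C]_n).
Hypothesis ab_M : forall t, M (a t) /\ M (b t).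
Hypothesis e_sum : e = \sum_(t < r) a t *t b t.

Lemma M_lincomb I (s : seq I) (c : I -> C) (x : I -> 'M[C]_n) :
  (forall i, M (x i)) -> M (\sum_(i <- s) c i *: x i).
Proof.
move=> Mx; rewrite /inM linear_sum summx_sub // => i _.
by rewrite linearZ scalemx_sub //; apply: Mx.
Qed.

Definition eps_s z := mulmap (tensmap S id (Delta z)).

Lemma linear_eps_s : linear eps_s.
Proof.
apply: (linear_comp_of (g := @mulmap R n)); first exact: linear_mulmap.
exact: linear_comp_of (linear_tensmap _ _) Delta_linear.
Qed.

Lemma tensmap_eps_s_Delta x : M x -> tensmap eps_s id (Delta x) = ('1 *t x) *m e.
Proof. exact: eps_s_Delta. Qed.

Lemma tensmap_eps_s_e : tensmap eps_s id e = e.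
Proof. by rewrite tensmap_eps_s_Delta // tensmx11 mul1mx. Qed.

Lemma sum_Sa_mul_b : \sum_(t < r) S (a t) *m b t = '1.
Proof.
have eps_s1 : epsr eps (tensmap eps_s id e) = eps_s (epsr eps e).
  rewrite e_sum (tensmap_sum linear_eps_s) // !(linear_sum_of (linear_epsr eps)).
  rewrite (linear_sum_of linear_eps_s); apply: eq_bigr => t _.
  by rewrite !epsr_tensmx // (linearZ_of linear_eps_s).
rewrite tensmap_eps_s_e !eps_counit // in eps_s1.
by rewrite [RHS]eps_s1 /eps_s e_sum tensmap_sum // mulmap_sum.
Qed.

Lemma sum_Sb_mul_a : \sum_(t < r) S (b t) *m a t = '1.
Proof.
rewrite -S1 -sum_Sa_mul_b (linear_sum_of S_linear); apply: eq_bigr => t _.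
by case: (ab_M t) => Ma Mb; rewrite S_mul ?SK //; apply: S_M.
Qed.

Lemma e_sum_S : e = \sum_(t < r) S (b t) *t S (a t).
Proof.
have SS_e : tensmap S S e = flipmx e by rewrite S_Delta // S1.
by rewrite -[LHS]flipmxK -SS_e e_sum tensmap_sum // flipmx_sum.
Qed.

Lemma Delta_S x : M x -> Delta (S x) = flipmx (tensmap S S (Delta x)).
Proof. by move=> Mx; rewrite S_Delta // flipmxK. Qed.

Lemma flip_SS_tensmx_mul_e y z : M y -> M z ->
  flipmx (tensmap S S ((y *t z) *m e)) = e *m (S z *t S y).
Proof.
move=> My Mz; rewrite {1}e_sum mulmx_sumr.
under eq_bigr do rewrite tensmx_mul.
rewrite tensmap_sum // flipmx_sum e_sum_S mulmx_suml; apply: eq_bigr => t _.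
by case: (ab_M t) => Ma Mb; rewrite tensmx_mul !S_mul.
Qed.

Lemma flip_SS_e_mul_tensmx y z : M y -> M z ->
  flipmx (tensmap S S (e *m (y *t z))) = (S z *t S y) *m e.
Proof.
move=> My Mz; rewrite {1}e_sum mulmx_suml.
under eq_bigr do rewrite tensmx_mul.
rewrite tensmap_sum // flipmx_sum e_sum_S mulmx_sumr; apply: eq_bigr => t _.
by case: (ab_M t) => Ma Mb; rewrite tensmx_mul !S_mul.
Qed.

Lemma Delta_S_Ns z : Ns z -> Delta (S z) = e *m (S z *t '1).
Proof. by case=> Mz [_ Dz]; rewrite Delta_S // Dz flip_SS_tensmx_mul_e // S1. Qed.

Lemma eps_s_mulS y z : M y -> Ns z -> eps_s (y *m S z) = z *m eps_s y.
Proof.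
move=> My Nz; case: (Nz) => Mz _; have MSz := S_M Mz.
have [r' [c [d [cd_M Dy]]]] := Delta_MM My.
rewrite /eps_s Delta_mul // Delta_S_Ns // mulmxA -Delta_mul // mulmx1 Dy mulmx_suml.
under eq_bigr do rewrite tensmx_mul mulmx1.
rewrite !tensmap_sum // !mulmap_sum mulmx_sumr; apply: eq_bigr => t _.
by case: (cd_M t) => Mc Md; rewrite S_mul // SK // mulmxA.
Qed.

Lemma Ns_tensmx_e z : Ns z -> (z *t '1) *m e = ('1 *t S z) *m e.
Proof.
move=> Nz; case: (Nz) => Mz _.
rewrite -tensmap_eps_s_Delta; last exact: S_M.
rewrite Delta_S_Ns // {2}e_sum mulmx_suml.
under eq_bigr do rewrite tensmx_mul mulmx1.
rewrite (tensmap_sum linear_eps_s) // -{1}tensmap_eps_s_e {1}e_sum.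
rewrite (tensmap_sum linear_eps_s) // mulmx_sumr; apply: eq_bigr => t _.
by case: (ab_M t) => Ma _; rewrite tensmx_mul mul1mx eps_s_mulS.
Qed.

Definition e_slice i j := mxslice i j e.

Lemma e_slice_sum i j : e_slice i j = \sum_(t < r) a t i j *: b t.
Proof.
rewrite /e_slice e_sum (linear_sum_of (linear_mxslice i j)).
by apply: eq_bigr => t _; rewrite mxslice_tensmx.
Qed.

Lemma M_e_slice i j : M (e_slice i j).
Proof. by rewrite e_slice_sum; apply: M_lincomb => t; case: (ab_M t). Qed.

Lemma e_slice_decomp : e = \sum_(i < n) \sum_(j < n) delta_mx i j *t e_slice i j.
Proof. exact: matrix_sum_tens_delta. Qed.

Definition slice_eps_s i j (Y : 'M[C]_(n * (n * n))) : 'M[C]_(n * n) :=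
  mxslice i j (tensor_ext (fun x B => eps_s x *t B) Y).

Lemma linear_slice_eps_s i j : linear (slice_eps_s i j).
Proof. exact: linear_comp_of (linear_mxslice i j) (linear_tensor_ext _). Qed.

Lemma bilinear_eps_s_tensmx :
  bilinear_for *:%R *:%R (fun x (B : 'M[C]_(n * n)) => eps_s x *t B).
Proof. exact: (bilinear_tensmx_comp linear_eps_s (g := id)). Qed.

Lemma slice_eps_s_tensmxA i j (X : 'M[C]_(n * n)) (v : 'M[C]_n) :
  slice_eps_s i j (castmx (esym (mulnA n n n), esym (mulnA n n n)) (X *t v))
  = mxslice i j (tensmap eps_s id X) *t v.
Proof.
apply: (linear_tensmx_eq
  (F := fun X => slice_eps_s i j (castmx (esym (mulnA n n n), esym (mulnA n n n)) (X *t v)))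
  (G := fun X => mxslice i j (tensmap eps_s id X) *t v)) X.
- apply: linear_comp_of (linear_slice_eps_s i j) _.
  exact: linear_comp_of (linear_castmx _) (linear_tensmxl v).
- apply: linear_comp_of (linear_tensmxl v) _.
  exact: linear_comp_of (linear_mxslice i j) (linear_tensmap _ _).
move=> x y; rewrite tensmxA /slice_eps_s (tensor_ext_tensmx bilinear_eps_s_tensmx).
rewrite (tensmap_tensmx linear_eps_s) // !mxslice_tensmx.
by rewrite (linearZ_of (linear_tensmxl v)).
Qed.

(* Apply eps_s (x) id (x) id, then the (i, j) slice of the first leg, to both
   sides of coassociativity at 1. *)
Lemma Delta_e_slice_left i j : Delta (e_slice i j) = e *m (e_slice i j *t '1).
Proof.
have coassoc_l : slice_eps_s i j
    (castmx (esym (mulnA n n n), esym (mulnA n n n)) (tensmap Delta id e))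
    = \sum_(t < r) (a t *m e_slice i j) *t b t.
  rewrite {1}e_sum (tensmap_sum Delta_linear) //.
  rewrite (linear_sum_of (linear_comp_of (linear_slice_eps_s i j) (linear_castmx _))).
  apply: eq_bigr => t _; case: (ab_M t) => Ma _.
  by rewrite slice_eps_s_tensmxA tensmap_eps_s_Delta // mxslice_tens1mx.
have coassoc_r : slice_eps_s i j (tensmap id Delta e) = Delta (e_slice i j).
  rewrite /e_slice -{2}tensmap_eps_s_e e_sum (tensmap_sum linear_eps_s) //.
  rewrite (tensmap_sum _ Delta_linear) //.
  rewrite (linear_sum_of (linear_slice_eps_s i j)) (linear_sum_of (linear_mxslice i j)).
  rewrite (linear_sum_of Delta_linear); apply: eq_bigr => t _.
  rewrite /slice_eps_s (tensor_ext_tensmx bilinear_eps_s_tensmx).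
  by rewrite !mxslice_tensmx (linearZ_of Delta_linear).
rewrite -coassoc_r -Delta_coassoc // coassoc_l e_sum mulmx_suml.
by apply: eq_bigr => t _; rewrite tensmx_mul mulmx1.
Qed.

Lemma adjmx_e : adjmx e = e.
Proof. by rewrite -Delta_adj // adjmx1. Qed.

Lemma adjmx_e_slice i j : adjmx (e_slice i j) = e_slice j i.
Proof.
apply/matrixP => k l.
transitivity ((adjmx e) (mxtens_index (j, k)) (mxtens_index (i, l))); first by rewrite !mxE.
by rewrite adjmx_e !mxE.
Qed.

Lemma Delta_e_slice_right i j : Delta (e_slice i j) = (e_slice i j *t '1) *m e.
Proof.
have Mw := M_e_slice j i.
rewrite -(adjmx_e_slice j i) Delta_adj // Delta_e_slice_left.
by rewrite adjmx_mul adjmx_tens adjmx1 adjmx_e.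
Qed.

Lemma S_e_slice_Ns i j : Ns (S (e_slice i j)).
Proof.
have Mw := M_e_slice i j.
split; first exact: S_M.
rewrite Delta_S //; split.
  by rewrite Delta_e_slice_right flip_SS_tensmx_mul_e // S1.
by rewrite Delta_e_slice_left flip_SS_e_mul_tensmx // S1.
Qed.

Lemma sum_S_e_slice : \sum_(i < n) \sum_(j < n) S (e_slice i j) *m delta_mx i j = '1.
Proof.
rewrite -sum_Sb_mul_a.
under eq_bigr => i _ do under eq_bigr => j _ do
  rewrite e_slice_sum (linear_sum_of S_linear) mulmx_suml.
under eq_bigr => i _ do rewrite exchange_big.
rewrite exchange_big; apply: eq_bigr => t _.
rewrite {2}(matrix_sum_delta (a t)) mulmx_sumr; apply: eq_bigr => i _.
rewrite mulmx_sumr; apply: eq_bigr => j _.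
by rewrite (linearZ_of S_linear) -scalemxAl scalemxAr.
Qed.

Variables (K : nat) (na : 'I_K -> nat)
  (f : forall al : 'I_K, 'I_(na al) -> 'I_(na al) -> 'M[C]_n).
Arguments f : clear implicits.
Hypothesis na_gt0 : forall al, (0 < na al)%N.
Hypothesis f_mul_neq : forall al be (p q : 'I_(na al)) (p' q' : 'I_(na be)),
  al != be -> f al p q *m f be p' q' = 0.
Hypothesis f_mul : forall al (p q p' q' : 'I_(na al)),
  f al p q *m f al p' q' = if q == p' then f al p q' else 0.
Hypothesis f_sum1 : \sum_(al < K) \sum_(p < na al) f al p p = '1.
Hypothesis Ns_span : forall x, Ns x <->
  exists c : forall al : 'I_K, 'I_(na al) -> 'I_(na al) -> C,
    x = \sum_(al < K) \sum_(p < na al) \sum_(q < na al) c al p q *: f al p q.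

Lemma f_Ns al p q : Ns (f al p q).
Proof.
apply/Ns_span; exists (fun be (p' q' : 'I_(na be)) =>
  [&& al == be, nat_of_ord p == p' & nat_of_ord q == q']%:R).
rewrite (bigD1 al) //= [X in _ + X]big1 ?addr0 => [|be /negbTE neq_be]; last first.
  by apply: big1 => p' _; apply: big1 => q' _; rewrite eq_sym neq_be scale0r.
rewrite (bigD1 p) //= [X in _ + X]big1 ?addr0 => [|p' neq_p]; last first.
  have -> : (nat_of_ord p == p') = false by rewrite eq_sym; apply: negbTE.
  by apply: big1 => q' _; rewrite andbF scale0r.
rewrite (bigD1 q) //= [X in _ + X]big1 ?addr0 => [|q' neq_q]; last first.
  have -> : (nat_of_ord q == q') = false by rewrite eq_sym; apply: negbTE.
  by rewrite !andbF scale0r.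
by rewrite !eqxx scale1r.
Qed.

Lemma M_f al p q : M (f al p q).
Proof. by case: (f_Ns p q). Qed.

Definition e_units := \sum_(al < K) (na al)%:R^-1 *:
  \sum_(p < na al) \sum_(q < na al) (f al p q *t S (f al q p)).

Lemma e_units_mul_e : e_units *m e = e.
Proof.
have summand_e al p q : (f al p q *t S (f al q p)) *m e = ('1 *t S (f al p p)) *m e.
  rewrite tensmx_decl -mulmxA Ns_tensmx_e ?mulmxA ?tensmx_mul ?mul1mx; last exact: f_Ns.
  by rewrite -S_mul ?f_mul ?eqxx //; apply: M_f.
transitivity (('1 *t S (\sum_(al < K) \sum_(p < na al) f al p p)) *m e); last first.
  by rewrite f_sum1 S1 tensmx11 mul1mx.
rewrite /e_units (linear_sum_of S_linear) (linear_sum_of (linear_tensmxr _)) !mulmx_suml.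
apply: eq_bigr => al _; rewrite (linear_sum_of S_linear).
rewrite (linear_sum_of (linear_tensmxr _)) -scalemxAl !mulmx_suml scaler_sumr.
apply: eq_bigr => p _; rewrite mulmx_suml (eq_bigr _ (fun q _ => summand_e al p q)).
rewrite sumr_const card_ord -scalerMnr scalerMnl -mulr_natr mulVf ?scale1r //.
by rewrite pnatr_eq0 -lt0n na_gt0.
Qed.

Lemma e_units_tensmx_f be x y :
  e_units *m ('1 *t S (f be x y)) = e_units *m (f be x y *t '1).
Proof.
rewrite /e_units !mulmx_suml; apply: eq_bigr => al _; rewrite -!scalemxAl; congr (_ *: _).
rewrite !mulmx_suml; apply: eq_bigr => p _; rewrite !mulmx_suml.
under eq_bigr => q _ do rewrite tensmx_mul mulmx1 -(S_mul (M_f _ _) (M_f _ _)).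
under [in RHS]eq_bigr => q _ do rewrite tensmx_mul mulmx1.
have [eq_al|neq_al] := eqVneq al be; last first.
  rewrite big1 => [|q _]; last by rewrite f_mul_neq 1?eq_sym // (linear0_of S_linear) tensmx0.
  by rewrite big1 // => q _; rewrite f_mul_neq // tens0mx.
subst be; under eq_bigr => q _ do rewrite f_mul.
under [in RHS]eq_bigr => q _ do rewrite f_mul.
rewrite (bigD1 y) //= eqxx big1 ?addr0 => [|q neq_q]; last first.
  by rewrite eq_sym (negbTE neq_q) (linear0_of S_linear) tensmx0.
rewrite (bigD1 x) //= eqxx big1 ?addr0 // => q neq_q.
by rewrite (negbTE neq_q) tens0mx.
Qed.

Lemma e_units_tensmx_S z : Ns z -> e_units *m ('1 *t S z) = e_units *m (z *t '1).
Proof.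
case/Ns_span => c ->.
have lin_l : linear (fun z => e_units *m ('1 *t S z)).
  exact: linear_comp_of (linear_mulmxl _) (linear_comp_of (linear_tensmxr _) S_linear).
have lin_r : linear (fun z : 'M[C]_n => e_units *m (z *t '1)).
  exact: linear_comp_of (linear_mulmxl _) (linear_tensmxl _).
rewrite (linear_sum_of lin_l) (linear_sum_of lin_r); apply: eq_bigr => al _.
rewrite (linear_sum_of lin_l) (linear_sum_of lin_r); apply: eq_bigr => p _.
rewrite (linear_sum_of lin_l) (linear_sum_of lin_r); apply: eq_bigr => q _.
by rewrite (linearZ_of lin_l) (linearZ_of lin_r) e_units_tensmx_f.
Qed.

Lemma e_fixes_e_units : e_units *m e = e_units.
Proof.
rewrite {1}e_slice_decomp mulmx_sumr.
transitivity (e_units *m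
  ((\sum_(i < n) \sum_(j < n) S (e_slice i j) *m delta_mx i j) *t '1)); last first.
  by rewrite sum_S_e_slice tensmx11 mulmx1.
rewrite (linear_sum_of (linear_tensmxl _)) mulmx_sumr; apply: eq_bigr => i _.
rewrite mulmx_sumr (linear_sum_of (linear_tensmxl _)) mulmx_sumr; apply: eq_bigr => j _.
rewrite tensmx_decl -{1}(SK (M_e_slice i j)) mulmxA (e_units_tensmx_S (S_e_slice_Ns i j)).
by rewrite -mulmxA tensmx_mul mulmx1.
Qed.

Lemma Delta1_matrix_units : e = e_units.
Proof. by rewrite -[LHS]e_units_mul_e e_fixes_e_units. Qed.

End WeakKacAlgebra.

Theorem proposition2p1p11 (R : realType) (n m : nat) (MM : 'M[R[i]]_(m, n * n))
  (Delta : 'M[R[i]]_n -> 'M[R[i]]_(n * n)) (S : 'M[R[i]]_n -> 'M[R[i]]_n)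
  (eps : 'M[R[i]]_n -> R[i])
  (K : nat) (na : 'I_K -> nat)
  (f : forall a : 'I_K, 'I_(na a) -> 'I_(na a) -> 'M[R[i]]_n) :
  is_weak_Kac MM Delta S eps ->
  (forall a, (0 < na a)%N) ->
  (* system of matrix units spanning N_s *)
  (forall a p q, f a p q != 0) ->
  (forall a b p q r s, a != b -> f a p q *m f b r s = 0) ->
  (forall a p q r s, f a p q *m f a r s = if q == r then f a p s else 0) ->
  (forall a p q, adjmx (f a p q) = f a q p) ->
  \sum_(a < K) \sum_(p < na a) f a p p = 1%:M ->
  (forall x, in_Ns MM Delta x <->
     exists c : forall a : 'I_K, 'I_(na a) -> 'I_(na a) -> R[i],
       x = \sum_(a < K) \sum_(p < na a) \sum_(q < na a) c a p q *: f a p q) ->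
  Delta 1%:M =
    \sum_(a < K) (na a)%:R^-1 *:
      \sum_(p < na a) \sum_(q < na a) (f a p q *t S (f a q p)).
Proof.
move=> [[M1 [_ _]] [[Delta_linear [Delta_MM [_ [Delta_mul [Delta_adj Delta_coassoc]]]]]
  [[S_linear [S_M [S1 [S_mul [_ [SK S_Delta]]]]]]
  [eps_scalar [eps_counit [_ [_ [_ eps_s_Delta]]]]]]]].
move=> na_gt0 _ f_mul_neq f_mul _ f_sum1 Ns_span.
have [r [a [b [ab_M e_sum]]]] := Delta_MM _ M1.
exact: (Delta1_matrix_units M1 Delta_linear Delta_MM Delta_mul Delta_adj Delta_coassoc
  S_linear S_M S1 S_mul SK S_Delta eps_scalar (fun x Mx => (eps_counit x Mx).2)
  eps_s_Delta ab_M e_sum na_gt0 f_mul_neq f_mul f_sum1 Ns_span).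
Qed.
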